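(* For $n\ge 2$, let $Q_n^B$ denote the number of relative derangements of type $B$ on $[n]$ and $D_n^B$ the number of derangements of type $B$ on $[n]$ (with $D_0^B=1$). Then $$Q_n^B = D_n^B + D_{n-1}^B.$$
   Context: Let $[n]=\{1,\dots,n\}$. A signed permutation on $[n]$ is a bijection $\pi$ of $\{\bar 1,\dots,\bar n,1,\dots,n\}$ with $\pi(\bar i)=\overline{\pi(i)}$; equivalently, a word $\pi_1\pi_2\cdots\pi_n$ which is an ordinary permutation of $[n]$ in which some entries carry a bar. A derangement of type $B$ on $[n]$ is a signed permutation $\pi_1\cdots\pi_n$ with $\pi_i\neq i$ (as a signed element, i.e. $\pi_i=\bar i$ is allowed) for all $i\in[n]$. A relative derangement of type $B$ on $[n]$ is a signed permutation $\pi_1\cdots\pi_n$ on $[n]$ such that for every $1\le i\le n-1$, the entry $i$ is not immediately followed by $i+1$, and the entry $\bar i$ is not immediately followed by $\overline{i+1}$. *)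

From mathcomp Require Import all_boot all_order all_fingroup.
Set Implicit Arguments. Unset Strict Implicit. Unset Printing Implicit Defensive.

(* A signed permutation on [n] (0-indexed as 'I_n) is a pair (s, b):
   the word pi_1 ... pi_n has absolute values given by the permutation s
   (position i carries the value s i) and b i = true means that the entry
   at position i carries a bar. This is in bijection with signed
   permutations (bijections of {bar n..bar 1,1..n} commuting with bar). *)
Definition signed_perm (n : nat) : finType := ({perm 'I_n} * {ffun 'I_n -> bool})%type.

(* pi_i <> i as a signed element: forbidden is value i unbarred at position i. *)
Definition is_derangementB n (p : signed_perm n) : bool :=
  [forall i : 'I_n, ~~ ((p.1 i == i) && ~~ p.2 i)].

(* For consecutive positions j, j+1: not (pi_j = k and pi_{j+1} = k+1) and
   not (pi_j = bar k and pi_{j+1} = bar (k+1)). *)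
Definition is_rel_derangementB n (p : signed_perm n) : bool :=
  [forall j : 'I_n, forall j' : 'I_n,
     (val j' == (val j).+1) ==>
     ~~ [&& (val (p.1 j')) == (val (p.1 j)).+1 & p.2 j == p.2 j']].

Definition DB (n : nat) : nat := #|[pred p : signed_perm n | is_derangementB p]|.
Definition QB (n : nat) : nat := #|[pred p : signed_perm n | is_rel_derangementB p]|.

From mathcomp Require Import all_boot all_order all_fingroup.
From mathcomp Require Import zify ssralg ssrint.
Set Implicit Arguments. Unset Strict Implicit. Unset Printing Implicit Defensive.

(* Write a signed permutation as its word of letters (|pi_i|, pi_i barred?).
   Relative derangements are the words avoiding the n-1 successions
   (k, b)(k+1, b); derangements are those avoiding the n fixed points
   (i, unbarred) at position i. Merging a succession into a single letter is a
   bijection onto words of length one less, so any j prescribed successions occur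
   together in 2^(n-j) (n-j)! words, exactly as many as j prescribed fixed points.
   By inclusion-exclusion Q_n is the number of words with no fixed point in the
   first n-1 positions, and splitting on whether the last letter is a fixed point
   gives D_n + D_(n-1). *)

Notation letter := (nat * bool)%type.

Definition signed_word n (w : seq letter) :=
  [&& size w == n, uniq (map fst w) & all (fun x => x < n) (map fst w)].

Definition succession k (x y : letter) := [&& x.1 == k, y.1 == k.+1 & x.2 == y.2].

Fixpoint has_succession k (w : seq letter) : bool :=
  match w with
  | x :: ((y :: _) as t) => succession k x y || has_succession k t
  | _ => false
  end.

Definition has_successions (T : seq nat) w := all (has_succession^~ w) T.

Lemma has_succession_cons k x w :
  has_succession k (x :: w) =
  (if w is y :: _ then succession k x y else false) || has_succession k w.
Proof. by case: w. Qed.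

Lemma has_succession_mem k w :
  has_succession k w -> k \in map fst w /\ k.+1 \in map fst w.
Proof.
elim: w => [|x [|y t] IH] //= /orP[/and3P[/eqP <- /eqP <- _]|/IH[h1 h2]].
  by rewrite !inE !eqxx !orbT.
by move: h1 h2; rewrite !inE => -> ->; rewrite !orbT.
Qed.

Fixpoint expand k (w : seq letter) : seq letter :=
  match w with
  | [::] => [::]
  | x :: t => if x.1 == k then (k, x.2) :: (k.+1, x.2) :: expand k t
              else (bump k.+1 x.1, x.2) :: expand k t
  end.

Fixpoint contract k (w : seq letter) : seq letter :=
  match w with
  | [::] => [::]
  | x :: t => if x.1 == k.+1 then contract k t
              else (unbump k.+1 x.1, x.2) :: contract k t
  end.

Lemma contract_expand k : cancel (expand k) (contract k).
Proof.
elim=> [|[x b] t IH] //=; case: eqP => [->|/eqP nx] /=.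
  have -> : (k == k.+1) = false by lia.
  by rewrite eqxx IH /unbump; congr ((_, _) :: _); lia.
have -> : (bump k.+1 x == k.+1) = false by rewrite /bump; lia.
by rewrite bumpK IH.
Qed.

Lemma expand_contract_notin k w : k \notin map fst w -> k.+1 \notin map fst w ->
  expand k (contract k w) = w.
Proof.
elim: w => [|[x b] t IH] //=; rewrite !inE !negb_or => /andP[h1 h2] /andP[h3 h4].
rewrite eq_sym (negbTE h3) /= IH //.
have -> : (unbump k.+1 x == k) = false by rewrite /unbump; lia.
by rewrite unbumpK // inE eq_sym.
Qed.

Lemma expand_contract k w : uniq (map fst w) -> has_succession k w ->
  expand k (contract k w) = w.
Proof.
elim: w => [|[x b] t IH] //= /andP[hx hu].
case: t IH hx hu => [|[y c] t] IH hx hu //= /orP[].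
  case/and3P => /= /eqP ? /eqP ? /eqP ?; subst.
  move: hx hu; rewrite /= !inE negb_or => /andP[_ hk] /andP[hk1 hu].
  have -> : (k == k.+1) = false by lia.
  have -> : unbump k.+1 k = k by rewrite /unbump; lia.
  by rewrite /= !eqxx expand_contract_notin.
move=> hs; have [hk hk1] := @has_succession_mem k ((y, c) :: t) hs.
have hxk1 : x != k.+1 by apply: contraNneq hx => ->.
have hxk : x != k by apply: contraNneq hx => ->.
rewrite (negbTE hxk1) /=.
change (if y == k.+1 then _ else _) with (contract k ((y, c) :: t)).
rewrite IH //.
have -> : (unbump k.+1 x == k) = false by rewrite /unbump; lia.
by rewrite unbumpK // inE.
Qed.
Lemma head_expand k y c t : exists u, expand k ((y, c) :: t) = (bump k.+1 y, c) :: u.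
Proof.
rewrite /=; case: eqP => [->|_]; last by eexists.
by exists ((k.+1, c) :: expand k t); rewrite /bump ltnn.
Qed.

Lemma has_succession_expand k k' v : k' != k ->
  has_succession k' (expand k v) = has_succession (unbump k k') v.
Proof.
move=> hk; elim: v => [|[x b] t IH] //.
rewrite [has_succession _ (_ :: t)]has_succession_cons -IH /=.
case: eqP => [->|/eqP hx].
  rewrite !has_succession_cons [succession k' _ _]/succession /= eq_sym (negbTE hk) /=.
  congr (_ || _); case: t {IH} => [|[y c] t] //.
  have [u ->] := head_expand k y c t.
  by rewrite /succession /= !andbA /bump /unbump; congr (_ && _); apply/idP/idP; lia.
rewrite has_succession_cons; congr (_ || _).
case: t {IH} => [|[y c] t] //.
have [u ->] := head_expand k y c t.
by rewrite /succession /= !andbA /bump /unbump; congr (_ && _); apply/idP/idP; lia.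
Qed.

Lemma has_succession_expand_self k v : k \in map fst v -> has_succession k (expand k v).
Proof.
elim: v => [|[x b] t IH] //=; rewrite inE.
case: (x =P k) => [->|/eqP hx] /=; first by rewrite /succession /= !eqxx.
move=> /orP[/eqP e|/IH]; first by rewrite e eqxx in hx.
by case: (expand k t) => [|y u] // ->; rewrite orbT.
Qed.

Lemma mem_expand k v y : (y \in map fst (expand k v)) =
  (y \in map (bump k.+1) (map fst v)) || ((y == k.+1) && (k \in map fst v)).
Proof.
elim: v => [|[x b] t IH] /=; first by rewrite andbF.
case: eqP => [->|/eqP hx] /=; rewrite !inE IH.
  have -> : bump k.+1 k = k by rewrite /bump ltnn.
  by rewrite eqxx; case: (y == k); case: (y == k.+1) => //=; rewrite ?orbT.
by rewrite [k == x]eq_sym (negbTE hx) /= orbA.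
Qed.

Lemma size_expand k v : size (expand k v) = size v + count_mem k (map fst v).
Proof.
elim: v => [|[x b] t IH] //=; case: eqP => _ /=; rewrite IH; set c := count _ _; lia.
Qed.

Lemma uniq_expand k v : uniq (map fst v) -> uniq (map fst (expand k v)).
Proof.
have mem_bump x s : (bump k.+1 x \in map (bump k.+1) s) = (x \in s).
  exact: (mem_map (can_inj (bumpK k.+1))).
have mem_bump_k s : (k \in map (bump k.+1) s) = (k \in s).
  have bump_k : bump k.+1 k = k by rewrite /bump ltnn.
  by rewrite -{1}bump_k mem_bump.
have notin_bump s : k.+1 \notin map (bump k.+1) s.
  by apply/mapP => -[z _ /eqP]; rewrite (negbTE (neq_bump _ _)).
elim: v => [|[x b] t IH] //= /andP[hx hu].
case: eqP => [ek|/eqP nk] /=; rewrite ?inE !mem_expand IH // andbT.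
  rewrite ek in hx.
  by rewrite mem_bump_k (negbTE hx) (negbTE (notin_bump _)) /= !andbF orbF; lia.
rewrite mem_bump (negbTE hx) /= negb_and; apply/orP; left.
by rewrite /bump; lia.
Qed.

Lemma signed_word_mem n w k : signed_word n w -> k < n -> k \in map fst w.
Proof.
case/and3P => /eqP hs hu /allP ha hk; apply/negPn/negP => hn.
have sub_iota : {subset k :: map fst w <= iota 0 n}.
  by move=> y; rewrite inE mem_iota add0n => /orP[/eqP ->|/ha].
have := uniq_leq_size (_ : uniq (k :: map fst w)) sub_iota.
by rewrite /= hn hu size_iota size_map hs => /(_ isT); rewrite ltnn.
Qed.

Lemma signed_word_expand n v k :
  signed_word n v -> k < n -> signed_word n.+1 (expand k v).
Proof.
move=> hv hk; have hm := signed_word_mem hv hk.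
case/and3P: hv => /eqP hs hu /allP ha.
apply/and3P; split.
- by rewrite size_expand hs count_uniq_mem // hm addn1.
- exact: uniq_expand.
- apply/allP => y; rewrite mem_expand => /orP[/mapP[z /ha hz ->]|/andP[/eqP -> _]] //.
  by rewrite /bump; lia.
Qed.

Lemma map_contract k w :
  map fst (contract k w) = map (unbump k.+1) (filter (predC1 k.+1) (map fst w)).
Proof. by elim: w => [|[x b] t IH] //=; case: eqP => _ /=; rewrite IH. Qed.

Lemma signed_word_contract n w k :
  signed_word n.+1 w -> has_succession k w -> signed_word n (contract k w).
Proof.
move=> hw hsk; have [_ hk1] := has_succession_mem hsk.
case/and3P: hw => /eqP hs hu /allP ha.
have hk := ha _ hk1.
apply/and3P; split; rewrite ?map_contract.
- rewrite -(size_map fst) map_contract size_map size_filter.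
  have := count_predC (pred1 k.+1) (map fst w).
  rewrite count_uniq_mem // hk1 size_map hs => h.
  by apply/eqP/(@addnI 1); rewrite [RHS]add1n -h.
- rewrite map_inj_in_uniq ?filter_uniq // => x y.
  by rewrite !mem_filter /= /unbump => /andP[hx _] /andP[hy _]; lia.
- apply/allP => y /mapP[z]; rewrite mem_filter /= => /andP[hz /ha hz2] ->.
  by rewrite /unbump; lia.
Qed.

Definition word n (p : signed_perm n) : seq letter :=
  [seq (val (p.1 i), p.2 i) | i <- enum 'I_n].

Definition signed_words n := map (@word n) (enum (signed_perm n)).

Lemma nth_word n (p : signed_perm n) (i : 'I_n) x0 :
  nth x0 (word p) i = (val (p.1 i), p.2 i).
Proof. by rewrite (nth_map i) ?size_enum_ord // nth_ord_enum. Qed.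

Lemma size_word n (p : signed_perm n) : size (word p) = n.
Proof. by rewrite size_map size_enum_ord. Qed.

Lemma word_inj n : injective (@word n).
Proof.
move=> [s b] [s' b'] e.
have h i : (val (s i), b i) = (val (s' i), b' i).
  by rewrite -(nth_word (s, b) i (0, true)) e nth_word.
congr (_, _); first by apply/permP => i; case: (h i) => /val_inj.
by apply/ffunP => i; case: (h i).
Qed.

Lemma uniq_signed_words n : uniq (signed_words n).
Proof. by rewrite map_inj_uniq ?enum_uniq //; apply: word_inj. Qed.

Lemma signed_word_word n (p : signed_perm n) : signed_word n (word p).
Proof.
apply/and3P; split.
- by rewrite size_word.
- rewrite -map_comp map_inj_uniq ?enum_uniq // => i j /= /val_inj.
  exact: perm_inj.
- by rewrite -map_comp; apply/allP => x /mapP[y _ ->]; rewrite /= ltn_ord.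
Qed.

Lemma mem_signed_words n w : (w \in signed_words n) = signed_word n w.
Proof.
apply/idP/idP; first by case/mapP => p _ ->; apply: signed_word_word.
case/and3P => /eqP hs hu /allP ha.
pose f (i : 'I_n) : 'I_n := insubd i (nth 0 (map fst w) i).
have f_lt (i : 'I_n) : nth 0 (map fst w) i < n.
  by apply: ha; rewrite mem_nth // size_map hs.
have f_inj : injective f.
  move=> i j /(congr1 val); rewrite !val_insubd !f_lt => /eqP.
  by rewrite nth_uniq ?size_map ?hs // => /eqP /val_inj.
apply/mapP; exists (perm f_inj, [ffun i : 'I_n => nth false (map snd w) i]).
  by rewrite mem_enum.
apply: (@eq_from_nth _ (0, true)); first by rewrite size_word hs.
move=> i; rewrite hs => hi; have -> : i = Ordinal hi by [].
rewrite nth_word /= permE ffunE /f val_insubd f_lt.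
by rewrite !(nth_map (0, true)) ?hs //; case: (nth _ w _).
Qed.

Lemma count_signed_words n (P : pred (seq letter)) :
  count P (signed_words n) = #|[pred p : signed_perm n | P (word p)]|.
Proof.
rewrite count_map cardE /enum_mem size_filter count_filter.
by apply: eq_count => x /=; rewrite andbT.
Qed.

Lemma count_bij (T1 T2 : eqType) (U1 : seq T1) (U2 : seq T2) (P1 : pred T1)
    (P2 : pred T2) (f : T2 -> T1) (g : T1 -> T2) :
  uniq U1 -> uniq U2 -> cancel f g ->
  (forall v, v \in U2 -> P2 v -> f v \in U1 /\ P1 (f v)) ->
  (forall w, w \in U1 -> P1 w -> [/\ g w \in U2, P2 (g w) & f (g w) = w]) ->
  count P1 U1 = count P2 U2.
Proof.
move=> u1 u2 fK fP gP.
rewrite -!size_filter -(size_map f (filter P2 U2)); apply: perm_size.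
apply: uniq_perm; first exact: filter_uniq.
  by rewrite (map_inj_uniq (can_inj fK)) filter_uniq.
move=> w; rewrite mem_filter; apply/andP/mapP => [[hw hU]|[v]].
  by have [hg hgP gK] := gP w hU hw; exists (g w); rewrite ?mem_filter ?hg ?hgP.
by rewrite mem_filter => /andP[hv hU] ->; have [] := fP v hU hv.
Qed.

Lemma count_has_successions_cons n k T :
  k < n -> k \notin T -> all (fun k' => k'.+1 < n.+1) T ->
  count (has_successions (k :: T)) (signed_words n.+1) =
  count (has_successions (map (unbump k) T)) (signed_words n).
Proof.
move=> hk hkT hT.
have neq_k k' : k' \in T -> k' != k by move=> hk'; apply: contraNneq hkT => <-.
apply: (@count_bij _ _ _ _ _ _ (expand k) (contract k)).
- exact: uniq_signed_words.
- exact: uniq_signed_words.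
- exact: contract_expand.
- move=> v; rewrite !mem_signed_words => hv hsv; split; first exact: signed_word_expand.
  rewrite /has_successions /= has_succession_expand_self ?(signed_word_mem hv) //=.
  apply/allP => k' hk'; rewrite has_succession_expand ?neq_k //.
  by apply: (allP hsv); rewrite map_f.
- move=> w; rewrite !mem_signed_words => hw /andP[hsk hsT].
  have hwu : uniq (map fst w) by case/and3P: hw.
  have wE := expand_contract hwu hsk.
  split => //; first exact: signed_word_contract hw hsk.
  apply/allP => y /mapP[k' hk' ->].
  by rewrite -has_succession_expand ?neq_k // wE (allP hsT).
Qed.

Lemma card_signed_perm n : #|signed_perm n| = 2 ^ n * n`!.
Proof. by rewrite card_prod card_Sn card_ffun card_bool card_ord mulnC. Qed.

Lemma count_has_successions n T : uniq T -> all (fun k => k.+1 < n) T ->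
  count (has_successions T) (signed_words n) = 2 ^ (n - size T) * (n - size T)`!.
Proof.
move: {2}(size T) (erefl (size T)) => s; elim: s T n => [|s IH] [|k T] n //=.
  move=> _ _ _; rewrite subn0 (eq_count (a2 := predT)) // count_predT size_map.
  by rewrite -cardE card_signed_perm.
case: n => [|n] [hs] /andP[hkT hu] /andP[hk hT] //.
have neq_k k' : k' \in T -> k' != k by move=> hk'; apply: contraNneq hkT => <-.
rewrite count_has_successions_cons // IH ?size_map ?subSS //.
  rewrite map_inj_in_uniq // => x y /neq_k hx /neq_k hy.
  by rewrite /unbump; lia.
apply/allP => y /mapP[x hx ->]; have := allP hT x hx.
by have := neq_k x hx; rewrite /unbump; lia.
Qed.

(* Positions past the end read the letter [(0, true)], which is never a fixed point. *)
Definition fixed_at i (w : seq letter) := nth (0, true) w i == (i, false).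

Definition has_fixed_points (T : seq nat) w := all (fixed_at^~ w) T.

Lemma fixed_at_word n (p : signed_perm n) (i : 'I_n) :
  fixed_at i (word p) = (p.1 i == i) && ~~ p.2 i.
Proof. by rewrite /fixed_at nth_word xpair_eqE; case: (p.2 i). Qed.

Lemma has_fixed_points_word n (p : signed_perm n) T : all (fun i => i < n) T ->
  has_fixed_points T (word p) =
  [forall i : 'I_n, (val i \in T) ==> (p.1 i == i) && ~~ p.2 i].
Proof.
move=> /allP hT; apply/allP/forallP => [H i|H x hx].
  by apply/implyP => /H; rewrite fixed_at_word.
by have := H (Ordinal (hT x hx)); rewrite hx -fixed_at_word.
Qed.

Lemma card_val_mem n T : uniq T -> all (fun i => i < n) T ->
  #|[set i : 'I_n | val i \in T]| = size T.
Proof.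
move=> hu /allP hT; rewrite cardE -(size_map val); apply: perm_size.
apply: uniq_perm => //; first by rewrite map_inj_uniq ?enum_uniq //; apply: val_inj.
move=> x; apply/mapP/idP => [[i]|hx]; first by rewrite mem_enum inE => h ->.
by exists (Ordinal (hT x hx)); rewrite // mem_enum inE.
Qed.

Lemma count_has_fixed_points n T : uniq T -> all (fun i => i < n) T ->
  count (has_fixed_points T) (signed_words n) = 2 ^ (n - size T) * (n - size T)`!.
Proof.
move=> hu hT; rewrite count_signed_words.
pose S := [set i : 'I_n | val i \in T].
rewrite (eq_card (B := [predX perm_on (~: S) & pffun_on false (~: S) [set: bool]])).
  rewrite cardX card_perm card_pffun_on cardsT card_bool.
  have := cardsC S; rewrite card_ord card_val_mem // => h.
  have -> : n - size T = #|~: S| by lia.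
  by rewrite mulnC.
case=> s b; rewrite inE /= has_fixed_points_word // inE /=.
apply/forallP/andP => [H|[hs /pffun_onP[hb _]] i].
  split.
    apply/subsetP => x; rewrite !inE; apply: contra => hx.
    by have := H x; rewrite hx /= => /andP[/eqP -> _]; rewrite eqxx.
  apply/pffun_onP; split; last by move=> y _; rewrite inE.
  apply/subsetP => x; rewrite !inE.
  by apply: contra => hx; have := H x; rewrite hx /= => /andP[_ /negbTE ->].
apply/implyP => hi; apply/andP; split.
  apply/negPn/negP => hsi; have := subsetP hs i.
  by rewrite !inE hsi hi => /(_ isT).
apply/negP => hbi; have := subsetP hb i.
by rewrite !inE hbi hi => /(_ isT).
Qed.

Section InclusionExclusion.
Import GRing.Theory.
Local Open Scope ring_scope.

Lemma count_int (Y : Type) (P : pred Y) (U : seq Y) :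
  (count P U)%:Z = \sum_(x <- U) (P x : nat)%:Z.
Proof. by elim: U => [|x U IH]; rewrite ?big_nil ?big_cons //= PoszD IH. Qed.

Lemma forall_int (I : finType) (P : pred I) (a : pred I) :
  ([forall i, P i ==> a i] : nat)%:Z = \prod_(i | P i) (a i : nat)%:Z.
Proof.
case: (boolP [forall i, P i ==> a i]) => [/forallP H|/forallPn[i]].
  by rewrite big1 // => i hi; have := H i; rewrite hi /= => ->.
by rewrite negb_imply => /andP[hi /negbTE ha]; rewrite (bigD1 i) //= ha mul0r.
Qed.

Lemma inclusion_exclusion (Y : Type) (U : seq Y) m (A : 'I_m -> pred Y) :
  (count (fun x => [forall i, ~~ A i x]) U)%:Z =
  \sum_(S : {set 'I_m}) (-1) ^+ #|S| * (count (fun x => [forall i in S, A i x]) U)%:Z.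
Proof.
under eq_bigr do rewrite count_int mulr_sumr.
rewrite exchange_big count_int /=; apply: eq_bigr => x _.
have -> : ([forall i, ~~ A i x] : nat)%:Z = \prod_i (- (A i x : nat)%:Z + 1).
  case: (boolP [forall i, ~~ A i x]) => [/forallP H|/forallPn[i /negPn hi]].
    by rewrite big1 // => i _; rewrite (negbTE (H i)).
  by rewrite (bigD1 i) //= hi addNr mul0r.
rewrite bigA_distr; apply: eq_bigr => S _.
by rewrite -big_mkcond /= prodrN forall_int.
Qed.

End InclusionExclusion.

Lemma eq_count_forall_not (Y Y' : Type) (U : seq Y) (U' : seq Y') m
    (A : 'I_m -> pred Y) (A' : 'I_m -> pred Y') :
  (forall S : {set 'I_m}, count (fun x => [forall i in S, A i x]) U =
                          count (fun x => [forall i in S, A' i x]) U') ->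
  count (fun x => [forall i, ~~ A i x]) U = count (fun x => [forall i, ~~ A' i x]) U'.
Proof.
move=> eqS; apply/eqP; rewrite -eqz_nat !inclusion_exclusion.
by apply/eqP/eq_bigr => S _; rewrite eqS.
Qed.

Definition avoids_succession m w := [forall i : 'I_m, ~~ has_succession i w].
Definition avoids_fixed m w := [forall i : 'I_m, ~~ fixed_at i w].

Lemma forall_in_all m (S : {set 'I_m}) (a : pred nat) :
  [forall i in S, a i] = all a (map val (enum S)).
Proof.
apply/forallP/allP => [H x /mapP[i hi ->]|H i].
  by have := H i; rewrite -mem_enum hi.
by apply/implyP => hi; apply: H; apply: map_f; rewrite mem_enum.
Qed.

Lemma count_avoids_succession n :
  count (avoids_succession n.-1) (signed_words n) =
  count (avoids_fixed n.-1) (signed_words n).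
Proof.
apply: eq_count_forall_not => S.
have uniq_S : uniq (map val (enum S)).
  by rewrite map_inj_uniq ?enum_uniq //; apply: val_inj.
have lt_S : all (fun k => k.+1 < n) (map val (enum S)).
  by apply/allP => _ /mapP[i _ ->]; have := ltn_ord i; rewrite /=; lia.
rewrite (eq_count (a2 := has_successions (map val (enum S)))); last first.
  by move=> w; exact: (forall_in_all S (has_succession^~ w)).
rewrite [RHS](eq_count (a2 := has_fixed_points (map val (enum S)))); last first.
  by move=> w; exact: (forall_in_all S (fixed_at^~ w)).
rewrite count_has_successions ?count_has_fixed_points //.
by apply/allP => k /(allP lt_S); lia.
Qed.

Lemma has_successionE k w : has_succession k w =
  has (fun j => succession k (nth (0, true) w j) (nth (0, true) w j.+1))
      (iota 0 (size w).-1).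
Proof.
elim: w => [|x t IH] //; rewrite has_succession_cons IH.
by case: t IH => [|y t] IH //=; rewrite -add1n iotaDl has_map.
Qed.

Lemma derangementB_word n (p : signed_perm n) :
  is_derangementB p = avoids_fixed n (word p).
Proof. by apply: eq_forallb => i; rewrite fixed_at_word. Qed.

Lemma rel_derangementB_word n (p : signed_perm n) :
  is_rel_derangementB p = avoids_succession n.-1 (word p).
Proof.
apply/forallP/forallP => [H k|H j].
  apply/negP; rewrite has_successionE size_word => /hasP[j].
  rewrite mem_iota add0n => hj.
  have hj0 : j < n by lia.
  have hj1 : j.+1 < n by lia.
  rewrite (nth_word p (Ordinal hj0)) (nth_word p (Ordinal hj1)) /succession /=.
  case/and3P => /eqP e1 /eqP e2 e3.
  by have /forallP/(_ (Ordinal hj1)) := H (Ordinal hj0); rewrite /= eqxx e1 e2 eqxx e3.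
apply/forallP => j'; apply/implyP => /eqP hj'; apply/negP => /andP[/eqP e1 e2].
have hk : p.1 j < n.-1.
  by have := ltn_ord (p.1 j'); have : (p.1 j' : nat) = (p.1 j).+1 := e1; lia.
have /negP := H (Ordinal hk); apply; rewrite has_successionE size_word.
have hj'' : (j' : nat) = j.+1 := hj'.
apply/hasP; exists (nat_of_ord j).
  by rewrite mem_iota add0n; have := ltn_ord j'; lia.
by rewrite (nth_word p j) -hj'' (nth_word p j') /succession /= e1 !eqxx e2.
Qed.

Lemma signed_word_rcons n v b : signed_word n.+1 (rcons v (n, b)) = signed_word n v.
Proof.
rewrite /signed_word map_rcons size_rcons rcons_uniq all_rcons /= eqSS ltnSn /=.
case: (size v == n) => //=.
have [hlt|] := boolP (all (fun x => x < n) (map fst v)).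
  have -> : n \notin map fst v by apply/negP => /(allP hlt); rewrite ltnn.
  by rewrite /=; case: (uniq _) => //=; apply/allP => x /(allP hlt); lia.
case: (boolP (n \in map fst v)) => //= hn hlt; case: (uniq _) => //=.
apply/negbTE; apply: contra hlt => /allP h; apply/allP => x hx.
have xn : x != n by apply: contraNneq hn => <-.
by have := h x hx; lia.
Qed.

Lemma fixed_at_rcons v x i : i < size v -> fixed_at i (rcons v x) = fixed_at i v.
Proof. by move=> hi; rewrite /fixed_at nth_rcons hi. Qed.

Lemma count_avoids_fixed_split n :
  count (avoids_fixed n) (signed_words n.+1) =
  count (avoids_fixed n.+1) (signed_words n.+1) + count (avoids_fixed n) (signed_words n).
Proof.
rewrite -size_filter -(count_predC (fixed_at n)) !count_filter addnC.
congr (_ + _).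
  apply: eq_count => w /=; rewrite andbC; apply/andP/forallP => [[/forallP H h] i|H].
    case: (ltngtP i n) => hi; first by have := H (Ordinal hi).
      by have := ltn_ord i; lia.
    by rewrite hi.
  split; last by have := H ord_max.
  by apply/forallP => i; have := H (widen_ord (leqnSn _) i).
apply: (@count_bij _ _ _ _ _ _ (rcons^~ (n, false)) (fun w => take (size w).-1 w)).
- exact: uniq_signed_words.
- exact: uniq_signed_words.
- by move=> v /=; rewrite size_rcons -cats1 take_size_cat.
- move=> v; rewrite !mem_signed_words signed_word_rcons => hv hP; split => //.
  have hs : size v = n by case/and3P: hv => /eqP.
  rewrite /= {1}/fixed_at nth_rcons hs ltnn !eqxx /=.
  by apply/forallP => i; rewrite fixed_at_rcons ?hs //; exact: (forallP hP).
- move=> w; rewrite !mem_signed_words => hw /andP[hF hP].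
  have hs : size w = n.+1 by move/and3P: (hw) => [/eqP].
  rewrite hs /=.
  have wE : w = rcons (take n w) (n, false).
    by rewrite -(eqP hF) -take_nth ?hs // -hs take_size.
  have hst : size (take n w) = n by rewrite size_takel // hs.
  split; last exact: esym.
    by rewrite -(signed_word_rcons _ _ false) -wE.
  apply/forallP => i; rewrite -(@fixed_at_rcons _ (n, false)) ?hst // -wE.
  exact: (forallP hP).
Qed.

Theorem theorem1 (n : nat) : 2 <= n -> QB n = DB n + DB n.-1.
Proof.
case: n => [|n] // _.
have DBE k : DB k = count (avoids_fixed k) (signed_words k).
  by rewrite count_signed_words; apply: eq_card => p; rewrite !inE derangementB_word.
have QBE : QB n.+1 = count (avoids_succession n.+1.-1) (signed_words n.+1).
  by rewrite count_signed_words; apply: eq_card => p; rewrite !inE rel_derangementB_word.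
by rewrite QBE count_avoids_succession count_avoids_fixed_split !DBE.
Qed.
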